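(* Let $\mathcal{K}'\subseteq\mathcal{K}\subseteq\mathbb{R}^d$ be two convex sets (compact, with nonempty interior). Let $\beta,\gamma$ be reals with $\beta>\gamma>1$ and $\beta>d$, and let $\alpha\ge 2(\gamma+1)\beta^2\sqrt{d}$. Let $G=\mathrm{grid}(\beta\mathcal{K}'\cap\mathcal{K},\alpha)$. Then: (1) for every $x\in\mathcal{K}'$ there exists $x_g\in G$ such that $x_g+\gamma(x_g-x)\in\frac{1}{2\beta}\mathcal{K}'$; (2) for every $x\in\mathcal{K}\setminus\mathcal{K}'$ there exists $x_g\in G$ such that $x_g+\frac{\gamma}{\mu(x,\mathcal{K}')}(x_g-x)\in\frac{1}{2\beta}\mathcal{K}'$.
   Context: For a convex compact set $C\subseteq\mathbb{R}^d$ with nonempty interior, let $\mathcal{E}_C=\{x_0+Vu:\|u\|_2\le1\}$ be its minimum volume enclosing ellipsoid (John ellipsoid), with center $x_0$ and $V$ invertible. The Minkowski distance of $x\in\mathbb{R}^d$ to $C$ is $\mu(x,C)=d\sqrt{(x-x_0)^\top(VV^\top)^{-1}(x-x_0)}$ (i.e. the gauge of $x-x_0$ with respect to the ellipsoid $\mathcal{E}_C$ shrunk by factor $1/d$ about its center). For $b>0$, the scaled set is $bC=\{y\in\mathbb{R}^d:\mu(y,C)\le b\}$. The grid $\mathrm{grid}(C,\alpha)$ is constructed as follows: let $\mathcal{E}'$ be the minimum volume enclosing ellipsoid of $C$, $\mathcal{E}=\frac1d\mathcal{E}'$ (shrunk about its center), let $A$ be the (affine) invertible transformation mapping $\mathcal{E}$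 onto the Euclidean ball $B_\alpha(0)$ of radius $\alpha$ centered at $0$, and output $\mathrm{grid}(C,\alpha)=A^{-1}(\mathbb{Z}^d)\cap C$. *)

From mathcomp Require Import all_boot all_order all_algebra.
From mathcomp Require Import all_classical all_reals all_analysis.
Import Order.TTheory GRing.Theory Num.Theory.
Import numFieldNormedType.Exports.
Set Implicit Arguments. Unset Strict Implicit. Unset Printing Implicit Defensive.
Local Open Scope ring_scope.
Local Open Scope classical_set_scope.

Section Defs.
Variables (R : realType) (d : nat).

Definition enorm (u : 'cV[R]_d) : R := Num.sqrt (\sum_(i < d) (u i 0) ^+ 2).

Definition convex_set (C : set 'cV[R]_d) : Prop :=
  forall x y t, C x -> C y -> 0 <= t <= 1 -> C (t *: x + (1 - t) *: y).

Definition convex_body (C : set 'cV[R]_d) : Prop :=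
  convex_set C /\ compact C /\ interior C !=set0.

Definition ellipsoid (x0 : 'cV[R]_d) (V : 'M[R]_d) : set 'cV[R]_d :=
  [set x | exists u : 'cV[R]_d, enorm u <= 1 /\ x = x0 + V *m u].

(* (x0, V) describes a minimum volume enclosing ellipsoid of C: V invertible,
   C inside the ellipsoid, and its volume (proportional to |det V|) is minimal
   among all enclosing ellipsoids. *)
Definition is_MVEE (C : set 'cV[R]_d) (x0 : 'cV[R]_d) (V : 'M[R]_d) : Prop :=
  V \in unitmx /\ C `<=` ellipsoid x0 V /\
  (forall (x1 : 'cV[R]_d) (V1 : 'M[R]_d), V1 \in unitmx ->
     C `<=` ellipsoid x1 V1 -> `|\det V| <= `|\det V1|).

(* Minkowski distance mu(x, C) where (x0, V) is the MVEE of C *)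
Definition mink (x0 : 'cV[R]_d) (V : 'M[R]_d) (x : 'cV[R]_d) : R :=
  d%:R * Num.sqrt (((x - x0)^T *m invmx (V *m V^T) *m (x - x0)) 0 0).

(* the scaled set bC = { y : mu(y, C) <= b } *)
Definition scaled (b : R) (x0 : 'cV[R]_d) (V : 'M[R]_d) : set 'cV[R]_d :=
  [set y | mink x0 V y <= b].

Definition grid_map (alpha : R) (x1 : 'cV[R]_d) (V1 : 'M[R]_d)
    (M : 'M[R]_d) (c : 'cV[R]_d) : Prop :=
  M \in unitmx /\
  (fun x => M *m x + c) @` ellipsoid x1 ((d%:R)^-1 *: V1)
    = [set y | enorm y <= alpha].

Definition grid_set (C : set 'cV[R]_d) (M : 'M[R]_d) (c : 'cV[R]_d)
    : set 'cV[R]_d :=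
  [set x | C x /\ forall i : 'I_d, (M *m x + c) i 0 \is a Num.int].

End Defs.

From Pilot Require Import Defs.
From mathcomp Require Import all_boot all_order all_algebra.
From mathcomp Require Import all_classical all_reals all_analysis.
From mathcomp Require Import ring lra.
Import Order.TTheory GRing.Theory Num.Theory.
Import numFieldNormedType.Exports.
Set Implicit Arguments. Unset Strict Implicit. Unset Printing Implicit Defensive.
Local Open Scope ring_scope.
Local Open Scope classical_set_scope.

(* John's theorem says that the minimum volume ellipsoid of a convex body, shrunk
   by [1/d] about its center, lies inside the body: otherwise a hyperplane separates
   a point of the shrunk ellipsoid from the body, and the cap of the ellipsoid
   beyond it fits in an ellipsoid of smaller volume.  Hence [{mu(., K') <= 1}] lies
   in [K'], and since the shrunk ellipsoid of [C = beta K' /\ K] lies in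
   [beta K'], the grid map [A] expands the gauge of [K'] by the factor
   [alpha / beta]; rounding to the lattice moves a point by at most [sqrt d / 2]
   in [A]-coordinates, hence by at most [1 / (4 (gamma + 1) beta)] in that gauge.
   Given [x] and [t = gamma] (resp. [gamma / mu(x, K')]), round the point [z] that
   [xg |-> xg + t (xg - x)] sends to [x0] (resp. to [x0 - (x - x0) / (4 beta mu)]);
   the rounding error, amplified by [1 + t], keeps the image in
   [(1 / 2 beta) K'], and [xg] is a convex combination of [x] and that image,
   hence lies in [K] and has gauge at most [beta]. *)

Section Euclid.
Variables (R : realType) (d : nat).
Implicit Types (u v w : 'cV[R]_d) (A : 'M[R]_d).

Definition dotv u v : R := \sum_(i < d) u i 0 * v i 0.

Lemma dotvC u v : dotv u v = dotv v u.
Proof. by apply: eq_bigr => i _; rewrite mulrC. Qed.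

Lemma dotvDl u v w : dotv (u + v) w = dotv u w + dotv v w.
Proof. by rewrite /dotv -big_split; apply: eq_bigr => i _; rewrite !mxE mulrDl. Qed.

Lemma dotvDr u v w : dotv w (u + v) = dotv w u + dotv w v.
Proof. by rewrite dotvC dotvDl !(dotvC w). Qed.

Lemma dotvZl k u v : dotv (k *: u) v = k * dotv u v.
Proof. by rewrite /dotv mulr_sumr; apply: eq_bigr => i _; rewrite !mxE mulrA. Qed.

Lemma dotvZr k u v : dotv u (k *: v) = k * dotv u v.
Proof. by rewrite dotvC dotvZl dotvC. Qed.

Lemma dotvNl u v : dotv (- u) v = - dotv u v.
Proof. by rewrite -scaleN1r dotvZl mulN1r. Qed.

Lemma dotvNr u v : dotv u (- v) = - dotv u v.
Proof. by rewrite dotvC dotvNl dotvC. Qed.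

Lemma dotvBl u v w : dotv (u - v) w = dotv u w - dotv v w.
Proof. by rewrite dotvDl dotvNl. Qed.

Lemma dotvBr u v w : dotv w (u - v) = dotv w u - dotv w v.
Proof. by rewrite dotvDr dotvNr. Qed.

Lemma dotv0l v : dotv 0 v = 0.
Proof. by rewrite /dotv big1 // => i _; rewrite mxE mul0r. Qed.

Lemma dotv_trmx u v : (u^T *m v) 0 0 = dotv u v.
Proof. by rewrite mxE; apply: eq_bigr => i _; rewrite mxE. Qed.

Lemma dotv_mulmxr A u v : dotv u (A *m v) = dotv (A^T *m u) v.
Proof. by rewrite -!dotv_trmx trmx_mul trmxK mulmxA. Qed.

Lemma dotvv_ge0 u : 0 <= dotv u u.
Proof. by apply: sumr_ge0 => i _; rewrite -expr2 sqr_ge0. Qed.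

Lemma dotvv_eq0 u : (dotv u u == 0) = (u == 0).
Proof.
apply/idP/eqP => [|->]; last by rewrite dotv0l.
rewrite psumr_eq0 => [/allP u0|i _]; last by rewrite -expr2 sqr_ge0.
apply/matrixP => i j; rewrite ord1 mxE.
by have /implyP/(_ isT) := u0 i (mem_index_enum i); rewrite -expr2 sqrf_eq0 => /eqP.
Qed.

Lemma dotvv_gt0 u : u != 0 -> 0 < dotv u u.
Proof. by move=> u0; rewrite lt_def dotvv_eq0 u0 dotvv_ge0. Qed.

Lemma enormE u : enorm u = Num.sqrt (dotv u u).
Proof. by congr Num.sqrt; apply: eq_bigr => i _; rewrite expr2. Qed.

Lemma enorm_ge0 u : 0 <= enorm u.
Proof. by rewrite enormE sqrtr_ge0. Qed.

Lemma enorm_sq u : enorm u ^+ 2 = dotv u u.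
Proof. by rewrite enormE sqr_sqrtr // dotvv_ge0. Qed.

Lemma enorm0 : enorm (0 : 'cV[R]_d) = 0.
Proof. by rewrite enormE dotv0l sqrtr0. Qed.

Lemma enorm_gt0 u : u != 0 -> 0 < enorm u.
Proof. by move=> u0; rewrite enormE sqrtr_gt0 dotvv_gt0. Qed.

Lemma enormZ k u : enorm (k *: u) = `|k| * enorm u.
Proof. by rewrite !enormE dotvZl dotvZr mulrA -expr2 sqrtrM ?sqr_ge0 // sqrtr_sqr. Qed.

Lemma enormN u : enorm (- u) = enorm u.
Proof. by rewrite -scaleN1r enormZ normrN1 mul1r. Qed.

Lemma enorm_le1 u : (enorm u <= 1) = (dotv u u <= 1).
Proof. by rewrite enormE -[X in (_ <= X) = _]sqrtr1 ler_sqrt. Qed.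

Lemma cauchy_schwarz u v : dotv u v <= enorm u * enorm v.
Proof.
have [->|u0] := eqVneq u 0; first by rewrite dotv0l enorm0 mul0r.
have [->|v0] := eqVneq v 0; first by rewrite dotvC dotv0l enorm0 mulr0.
have a0 := enorm_gt0 u0; have b0 := enorm_gt0 v0.
have := dotvv_ge0 (enorm v *: u - enorm u *: v).
rewrite !(dotvBl, dotvBr, dotvZl, dotvZr) -!enorm_sq (dotvC v u).
have ab0 : 0 < enorm u * enorm v by rewrite mulr_gt0.
nra.
Qed.

Lemma enormD u v : enorm (u + v) <= enorm u + enorm v.
Proof.
rewrite -(ler_pXn2r (n:=2)) ?nnegrE ?addr_ge0 ?enorm_ge0 //.
rewrite enorm_sq dotvDl !dotvDr (dotvC v u) -!enorm_sq.
have := cauchy_schwarz u v; nra.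
Qed.

End Euclid.

Section Gauge.
Variables (R : realType) (d : nat).
Implicit Types (u v w x y : 'cV[R]_d) (V : 'M[R]_d).

Definition gauge V w : R := d%:R * enorm (invmx V *m w).

Lemma gauge_ge0 V w : 0 <= gauge V w.
Proof. by rewrite mulr_ge0 ?enorm_ge0. Qed.

Lemma gaugeD V u v : gauge V (u + v) <= gauge V u + gauge V v.
Proof. by rewrite -mulrDr ler_wpM2l // mulmxDr enormD. Qed.

Lemma gaugeZ V k w : gauge V (k *: w) = `|k| * gauge V w.
Proof. by rewrite /gauge -scalemxAr enormZ mulrCA. Qed.

Lemma gaugeN V w : gauge V (- w) = gauge V w.
Proof. by rewrite /gauge mulmxN enormN. Qed.

Lemma invmx_mul_trmx V : V \in unitmx -> invmx (V *m V^T) = (invmx V)^T *m invmx V.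
Proof.
move=> hV; have hVV : V *m V^T \in unitmx by rewrite unitmx_mul unitmx_tr hV.
have VVtK : V *m V^T *m ((invmx V)^T *m invmx V) = 1%:M.
  by rewrite mulmxA -(mulmxA V) -trmx_mul mulVmx // trmx1 mulmx1 mulmxV.
by rewrite -[RHS](mulKmx hVV) VVtK mulmx1.
Qed.

Lemma minkE x0 V y : V \in unitmx -> mink x0 V y = gauge V (y - x0).
Proof.
move=> hV; rewrite /mink invmx_mul_trmx // mulmxA -trmx_mul -mulmxA.
by rewrite dotv_trmx /gauge enormE.
Qed.

Lemma ellipsoidP x0 V y : V \in unitmx ->
  ellipsoid x0 V y <-> enorm (invmx V *m (y - x0)) <= 1.
Proof.
move=> hV; split => [[u [hu ->]]|hy]; first by rewrite addrC addKr mulKmx.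
by exists (invmx V *m (y - x0)); split; rewrite // mulKVmx // addrC subrK.
Qed.

Lemma mink_le_dim C x0 V y : is_MVEE C x0 V -> C y -> mink x0 V y <= d%:R.
Proof.
move=> [hV [sub _]] /sub /(ellipsoidP _ _ hV) y1.
by rewrite minkE // -[leRHS]mulr1 ler_wpM2l.
Qed.

Lemma convex_scaled b x0 V : V \in unitmx -> Defs.convex_set (scaled b x0 V).
Proof.
move=> hV x y t; rewrite /scaled /= !minkE // => hx hy /andP[t0 t1].
have -> : t *: x + (1 - t) *: y - x0 = t *: (x - x0) + (1 - t) *: (y - x0).
  by apply/matrixP => i j; rewrite !mxE; ring.
apply: le_trans (gaugeD _ _ _) _; rewrite !gaugeZ !ger0_norm ?subr_ge0 //.
have t1' : 0 <= 1 - t by rewrite subr_ge0.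
by have := ler_wpM2l t0 hx; have := ler_wpM2l t1' hy; lra.
Qed.

End Gauge.

Section Closed.
Variables (R : realType) (d : nat).

Lemma continuous_enorm_affine (N : 'M[R]_d) (q : 'cV[R]_d) :
  continuous (fun y : 'cV[R]_d => enorm (N *m (y - q))).
Proof.
set w := fun y : 'cV[R]_d => N *m (y - q).
have coord i : continuous (fun y => w y i 0).
  have -> : (fun y => w y i 0) = (fun y => \sum_(j < d) N i j * (y j 0 - q j 0)).
    by apply: funext => y; rewrite mxE; apply: eq_bigr => j _; rewrite !mxE.
  apply: continuous_big => [|j _ y]; first exact: add_continuous.
  apply: (@continuousM _ _ (fun=> N i j) (fun y : 'cV[R]_d => y j 0 - q j 0)).
    exact: cst_continuous.
  by apply: continuousB; [exact: coord_continuous | exact: cst_continuous].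
have sq : continuous (fun y => \sum_(i < d) w y i 0 * w y i 0).
  apply: continuous_big => [|i _ y]; first exact: add_continuous.
  by apply: (@continuousM _ _ (fun y => w y i 0) (fun y => w y i 0)); apply: coord.
have -> : (fun y => enorm (w y)) = Num.sqrt \o (fun y => \sum_(i < d) w y i 0 * w y i 0).
  by apply: funext => z; rewrite /= enormE.
by move=> y; exact: continuous_comp (sq y) (@sqrt_continuous R _).
Qed.

Lemma closed_scaled b x0 (V : 'M[R]_d) : V \in unitmx -> closed (scaled b x0 V).
Proof.
move=> hV.
have -> : scaled b x0 V = (fun y : 'cV[R]_d => gauge V (y - x0)) @^-1` [set r | r <= b].
  by apply/funext => y; rewrite /scaled /= minkE.
apply: (@preimage_closed _ _ (fun y : 'cV[R]_d => gauge V (y - x0))).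
  move=> y _; rewrite /gauge.
  apply: (@continuousM _ _ (fun=> d%:R : R)
    (fun y : 'cV[R]_d => enorm (invmx V *m (y - x0)))).
    exact: cst_continuous.
  exact: continuous_enorm_affine.
exact: closed_le.
Qed.

End Closed.

Section Determinant.
Variables (R : comUnitRingType) (d : nat).

Lemma det_1_rank1 (u v : 'cV[R]_d) : \det (1%:M + u *m v^T) = 1 + (v^T *m u) 0 0.
Proof.
have E : (block_mx 1%:M 0 v^T 1%:M : 'M[R]_(d + 1)) *m
           block_mx (1%:M + u *m v^T) u 0 1%:M *m block_mx 1%:M 0 (- v^T) 1%:M
         = block_mx 1%:M u 0 (1%:M + v^T *m u).
  rewrite !mulmx_block !(mul1mx, mulmx1, mul0mx, mulmx0, add0r, addr0).
  rewrite !(mulmxDl, mulmxDr, mulmxN, mulNmx, mul1mx, mulmx1, mulmxA).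
  congr block_mx; rewrite ?addrK //; last by rewrite addrC.
  by rewrite -opprD (addrC v^T) subrr.
have := congr1 determinant E.
rewrite !det_mulmx !det_lblock !det_ublock !det1 !mul1r !mulr1 => ->.
by rewrite det_mx11 !mxE.
Qed.

End Determinant.

Section CapAxes.
Variable R : realType.

Lemma bernoulli_inv (y : R) (k : nat) : 0 <= y -> (1 + y) ^+ k * (1 - k%:R * y) <= 1.
Proof.
move=> y0; elim: k => [|k IH]; first by rewrite expr0 mul0r subr0 mulr1.
rewrite exprSr -mulrA; apply: le_trans IH; apply: ler_wpM2l.
  by rewrite exprn_ge0 // addr_ge0.
have k0 : (0 : R) <= k%:R by [].
by rewrite -natr1; nra.
Qed.

(* The semi-axes are [a = 1 - eps] along the cap direction and [b = 1 + th * eps]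
   across it: [th] is squeezed between [s / (1 - s)], which keeps the cap covered,
   and [1 / k], which makes the volume [a * b ^+ k] drop below 1. *)
Lemma cap_axes_exist (k : nat) (s : R) : 0 <= s -> k.+1%:R * s < 1 ->
  exists a b : R, [/\ 0 < a, 0 < b, a * b ^+ k < 1, a <= b ^+ 2 &
    (1 - s) * a ^+ 2 + (s + 1 - 2 * a) * b ^+ 2 <= 0].
Proof.
move=> s0 hs; set D : R := k.+1%:R; set sig := 1 - s.
have D1 : 1 <= D by rewrite /D ler1n.
have sig0 : 0 < sig by rewrite /sig; nra.
have k0 : (0 : R) <= k%:R by [].
have kD : k%:R = D - 1 by rewrite /D -natr1 addrK.
set th := (D * sig)^-1.
have th0 : 0 < th by rewrite invr_gt0 mulr_gt0 //; lra.
have thE : th * (D * sig) = 1 by rewrite mulVf // gt_eqF // mulr_gt0 //; lra.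
have hsth : s < th * sig by nra.
have hkth : k%:R * th < 1.
  have -> : k%:R * th = 1 - th * (1 - D * s) by rewrite kD; move: thE; rewrite /sig; lra.
  by rewrite gtrBl mulr_gt0 // subr_gt0.
set den := sig + 4 * th + 2 * th ^+ 2.
have den0 : 0 < den by rewrite /den; nra.
set eps := (th * sig - s) / den.
have epsE : eps * den = th * sig - s by rewrite mulfVK // gt_eqF.
have eps0 : 0 < eps by rewrite divr_gt0 // subr_gt0.
have eps1 : eps < 1.
  rewrite ltr_pdivrMr // mul1r /den /sig.
  by have := mulr_ge0 (ltW th0) s0; have := sqr_ge0 th; nra.
have the0 : 0 < th * eps := mulr_gt0 th0 eps0.
have ab : 1 - eps <= (1 + th * eps) ^+ 2.
  by apply: le_trans (exprn_ege1 2 _); lra.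
exists (1 - eps), (1 + th * eps); split; [lra | lra | | by [] |].
- have := bernoulli_inv k (ltW the0).
  have : 0 < (1 + th * eps) ^+ k by rewrite exprn_gt0 //; lra.
  have : 1 - eps < 1 - k%:R * (th * eps).
    by rewrite mulrA ltrD2l ltrN2 gtr_pMl.
  nra.
- have -> : s + 1 = 2 - sig by rewrite /sig; ring.
  have -> : sig * (1 - eps) ^+ 2 + (2 - sig - 2 * (1 - eps)) * (1 + th * eps) ^+ 2 =
      eps * (2 * s - 2 * sig * th + eps * (sig + 4 * th - sig * th ^+ 2)
             + 2 * th ^+ 2 * eps ^+ 2) by rewrite /sig; ring.
  apply: mulr_ge0_le0; first exact: ltW.
  have : eps * (sig + 4 * th - sig * th ^+ 2) + 2 * th ^+ 2 * eps ^+ 2 <= eps * den.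
    by rewrite /den; nra.
  lra.
Qed.

Lemma cap_quadratic (a b s x : R) : 0 < a -> 0 <= s -> a <= b ^+ 2 ->
  (1 - s) * a ^+ 2 + (s + 1 - 2 * a) * b ^+ 2 <= 0 -> -1 <= x <= s ->
  (1 - x ^+ 2) * a ^+ 2 + (x - a + 1) ^+ 2 * b ^+ 2 <= a ^+ 2 * b ^+ 2.
Proof.
move=> a0 s0 ab Bs /andP[x1 xs].
set B := fun y => (1 - y) * a ^+ 2 + (y + 1 - 2 * a) * b ^+ 2.
have Bm1 : B (-1) <= 0 by rewrite /B; nra.
have x1' : 0 <= x + 1 by lra.
have Bx : B x <= 0.
  rewrite -(pmulr_rle0 _ (_ : 0 < 1 + s)); last by lra.
  have -> : (1 + s) * B x = (s - x) * B (-1) + (x + 1) * B s by rewrite /B; ring.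
  by rewrite -[0]addr0 lerD // mulr_ge0_le0 // subr_ge0.
have -> : (1 - x ^+ 2) * a ^+ 2 + (x - a + 1) ^+ 2 * b ^+ 2 =
  a ^+ 2 * b ^+ 2 + (x + 1) * B x by rewrite /B; ring.
by rewrite gerDl mulr_ge0_le0.
Qed.

End CapAxes.

Section Cap.
Variables (R : realType) (d : nat).
Implicit Types (n u w : 'cV[R]_d).

Lemma mulmx_rank1 n u : (n *m n^T) *m u = dotv n u *: n.
Proof.
rewrite -mulmxA; apply/matrixP => i j.
by rewrite !mxE big_ord1 (ord1 j) dotv_trmx mulrC.
Qed.

Lemma det_rank1 n (k : R) : \det (1%:M + k *: (n *m n^T)) = 1 + k * dotv n n.
Proof. by rewrite scalemxAl det_1_rank1 -scalemxAr mxE dotv_trmx. Qed.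

(* For a unit vector [n], the map with eigenvalue [a] on [n] and [b] on its orthogonal. *)
Definition axial_mx n (a b : R) : 'M[R]_d := b *: 1%:M + (a - b) *: (n *m n^T).

Lemma det_axial_mx n (a b : R) : (0 < d)%N -> dotv n n = 1 -> b != 0 ->
  \det (axial_mx n a b) = a * b ^+ d.-1.
Proof.
move=> hd hn b0; rewrite (_ : axial_mx n a b = b *: (1%:M + ((a - b) / b) *: (n *m n^T))).
  by rewrite detZ det_rank1 hn mulr1 -{1}(prednK hd) exprS; field.
by rewrite /axial_mx scalerDr scalerA mulrCA mulfV // mulr1.
Qed.

Lemma cap_sub_axial_ellipsoid n (a b s : R) : dotv n n = 1 -> 0 < a -> 0 < b ->
  0 <= s -> a <= b ^+ 2 -> (1 - s) * a ^+ 2 + (s + 1 - 2 * a) * b ^+ 2 <= 0 ->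
  [set w | enorm w <= 1 /\ dotv n w <= s] `<=` ellipsoid ((a - 1) *: n) (axial_mx n a b).
Proof.
move=> hn a0 b0 s0 ab Bs w [/= hw hws]; set x := dotv n w.
have [a_neq0 b_neq0] : a != 0 /\ b != 0 by rewrite !gt_eqF.
have hx1 : -1 <= x.
  have := cauchy_schwarz (- n) w; rewrite dotvNl enormN enormE hn sqrtr1 mul1r.
  by rewrite -/x; lra.
set u := b^-1 *: (w - x *: n) + ((x - (a - 1)) / a) *: n.
have hnu : dotv n u = (x - (a - 1)) / a.
  by rewrite /u dotvDr !dotvZr dotvBr dotvZr hn -/x; field; rewrite ?a_neq0 ?b_neq0.
exists u; split; last first.
  rewrite mulmxDl -scalemxAl mul1mx -scalemxAl mulmx_rank1 hnu.
  apply/matrixP => i j; rewrite /u !mxE.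
  by field; rewrite ?a_neq0 ?b_neq0.
rewrite enorm_le1.
have -> : dotv u u = (dotv w w - x ^+ 2) / b ^+ 2 + (x - (a - 1)) ^+ 2 / a ^+ 2.
  rewrite /u !(dotvDl, dotvDr, dotvZl, dotvZr, dotvBl, dotvBr, dotvNl, dotvNr).
  rewrite hn (dotvC w n) -/x.
  by field; rewrite ?a_neq0 ?b_neq0.
have ww : dotv w w <= 1 by rewrite -enorm_le1.
have key := cap_quadratic a0 s0 ab Bs (introT andP (conj hx1 hws)).
have -> : (x - (a - 1)) ^+ 2 / a ^+ 2 =
  ((1 - x ^+ 2) * a ^+ 2 + (x - a + 1) ^+ 2 * b ^+ 2) / (a ^+ 2 * b ^+ 2)
    - (1 - x ^+ 2) / b ^+ 2 by field; rewrite ?a_neq0 ?b_neq0.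
have : (dotv w w - x ^+ 2) / b ^+ 2 <= (1 - x ^+ 2) / b ^+ 2.
  by rewrite ler_pM2r ?invr_gt0 ?exprn_gt0 // lerD2r.
have : ((1 - x ^+ 2) * a ^+ 2 + (x - a + 1) ^+ 2 * b ^+ 2) / (a ^+ 2 * b ^+ 2) <= 1.
  by rewrite ler_pdivrMr ?mul1r // mulr_gt0 ?exprn_gt0.
lra.
Qed.

Lemma cap_sub_ellipsoid n (s : R) : (0 < d)%N -> dotv n n = 1 -> 0 <= s ->
  d%:R * s < 1 -> exists (tau : R) (A : 'M[R]_d), [/\ A \in unitmx, `|\det A| < 1 &
    [set w | enorm w <= 1 /\ dotv n w <= s] `<=` ellipsoid (tau *: n) A].
Proof.
move=> hd hn s0 hs; have hs' : d.-1.+1%:R * s < 1 by rewrite prednK.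
have [a [b [a0 b0 vol ab Bs]]] := cap_axes_exist s0 hs'.
have detA0 : 0 < \det (axial_mx n a b).
  by rewrite det_axial_mx ?gt_eqF // mulr_gt0 // exprn_gt0.
exists (a - 1), (axial_mx n a b); split; first by rewrite unitmxE unitfE gt_eqF.
  by rewrite gtr0_norm // det_axial_mx ?gt_eqF.
exact: cap_sub_axial_ellipsoid.
Qed.

End Cap.

Section John.
Variables (R : realType) (d : nat).
Implicit Types (C : set 'cV[R]_d) (p q u w y : 'cV[R]_d) (V : 'M[R]_d).

Lemma le0_of_le_scale (a b : R) : (forall l, 0 < l <= 1 -> a <= l * b) -> a <= 0.
Proof.
move=> h; have [b0|b0] := lerP b 0.
  by apply: le_trans (h 1 _) _; rewrite ?mul1r // ltr01 lexx.
rewrite leNgt; apply/negP => a0.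
set l := Num.min 1 (a / (2 * b)).
have l0 : 0 < l by rewrite lt_min ltr01 divr_gt0 // mulr_gt0.
have := h l; rewrite l0 ge_min lexx /= => /(_ isT).
have : l * (2 * b) <= a by rewrite -ler_pdivlMr ?mulr_gt0 // ge_min lexx orbT.
lra.
Qed.

Lemma nearest_point_obtuse C p q y : Defs.convex_set C -> C p ->
  (forall z, C z -> enorm (p - q) <= enorm (z - q)) -> C y ->
  dotv (q - p) (y - p) <= 0.
Proof.
move=> hC Cp pmin Cy; set v := q - p; set h := y - p.
suff : 2 * dotv v h <= 0 by lra.
apply: (le0_of_le_scale (b := dotv h h)) => l /andP[l0 l1].
have Cl : C (l *: y + (1 - l) *: p) by apply: hC; rewrite ?(ltW l0).
have := pmin _ Cl; rewrite -(ler_pXn2r (n := 2)) ?nnegrE ?enorm_ge0 // !enorm_sq.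
have -> : l *: y + (1 - l) *: p - q = l *: h - v.
  by apply/matrixP => i j; rewrite !mxE; ring.
have sq_expand (a b : 'cV[R]_d) :
    dotv (l *: a - b) (l *: a - b) = dotv b b - 2 * l * dotv b a + l ^+ 2 * dotv a a.
  by rewrite !(dotvBl, dotvBr, dotvZl, dotvZr) (dotvC a b); ring.
rewrite sq_expand -opprB -/v dotvNl dotvNr opprK.
nra.
Qed.

Lemma separate_point C q : (0 < d)%N -> Defs.convex_set C -> compact C -> ~ C q ->
  exists n s, [/\ n != 0, forall y, C y -> dotv n y <= s & s < dotv n q].
Proof.
move=> hd hC cC Cq; case: (pselect (C !=set0)) => [C0|C0].
  have f_cont : {within C, continuous (fun y => enorm (1%:M *m (y - q)))}.
    exact/continuous_subspaceT/continuous_enorm_affine.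
  have [p /set_mem Cp pmin] := compact_EVT_min C0 cC f_cont.
  have pq : q - p != 0 by rewrite subr_eq0; apply/eqP => qp; apply: Cq; rewrite qp.
  exists (q - p), (dotv (q - p) p); split => // [y Cy|].
    rewrite -subr_le0 -dotvBr; apply: nearest_point_obtuse Cp _ Cy => // z Cz.
    by rewrite -[p - q]mul1mx -[z - q]mul1mx; apply: pmin; exact: mem_set.
  by rewrite -subr_gt0 -dotvBr dotvv_gt0.
pose n : 'cV[R]_d := const_mx 1.
exists n, (dotv n q - 1); split; last by rewrite ltrBlDr ltrDl.
  by apply/negP => /eqP/matrixP/(_ (Ordinal hd) 0); rewrite !mxE; apply/eqP/oner_neq0.
by move=> y Cy; exfalso; apply: C0; exists y.
Qed.

Lemma halfspace_in_coords V x0 (n0 : 'cV[R]_d) (s0 : R) : V \in unitmx -> n0 != 0 ->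
  exists n s, dotv n n = 1 /\
    forall w, (dotv n0 (x0 + V *m w) <= s0) = (dotv n w <= s).
Proof.
move=> hV n00; set m := V^T *m n0.
have m0 : m != 0.
  have hVt : V^T \in unitmx by rewrite unitmx_tr.
  by apply: contraNneq n00 => m0; rewrite -(mulKmx hVt n0) -/m m0 mulmx0.
have r0 := enorm_gt0 m0; set r := enorm m in r0.
exists (r^-1 *: m), ((s0 - dotv n0 x0) / r); split.
  by rewrite dotvZl dotvZr -enorm_sq -/r mulrA -expr2 exprVn mulVf // expf_neq0 ?gt_eqF.
move=> w; rewrite dotvDr dotv_mulmxr -/m dotvZl -lerBrDl.
by rewrite mulrC ler_pM2r ?invr_gt0.
Qed.

Lemma ellipsoid_affine x0 V (c : 'cV[R]_d) (A : 'M[R]_d) w : ellipsoid c A w ->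
  ellipsoid (x0 + V *m c) (V *m A) (x0 + V *m w).
Proof. by move=> [u [hu ->]]; exists u; rewrite mulmxDr addrA mulmxA. Qed.

Lemma MVEE_shrunk_sub C x0 V u : (0 < d)%N -> Defs.convex_set C -> compact C ->
  is_MVEE C x0 V -> enorm u <= d%:R^-1 -> C (x0 + V *m u).
Proof.
move=> hd hC cC [hV [sub minV]] hu; case: (pselect (C (x0 + V *m u))) => // Cq.
have [n0 [s0 [n00 sep sepq]]] := separate_point hd hC cC Cq.
have [n [s [hn hns]]] := halfspace_in_coords x0 s0 hV n00.
have su : s < dotv n u by rewrite ltNge -hns -ltNge.
have d0 : (0 : R) < d%:R by rewrite ltr0n.
have ds : d%:R * Num.max s 0 < 1.
  have := cauchy_schwarz n u; rewrite enormE hn sqrtr1 mul1r => nu.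
  rewrite mulrC -ltr_pdivlMr // mul1r gt_max invr_gt0 d0 andbT.
  by apply: lt_le_trans su (le_trans nu hu).
have s'0 : 0 <= Num.max s 0 by rewrite le_max lexx orbT.
have [tau [A [hA dA capE]]] := cap_sub_ellipsoid hd hn s'0 ds.
have CE : C `<=` ellipsoid (x0 + V *m (tau *: n)) (V *m A).
  move=> y Cy; have yE : y = x0 + V *m (invmx V *m (y - x0)).
    by rewrite mulKVmx // addrC subrK.
  rewrite yE; apply: ellipsoid_affine; apply: capE; split.
    by apply/(ellipsoidP _ _ hV); exact: sub.
  by rewrite le_max -hns -yE sep.
have hVA : V *m A \in unitmx by rewrite unitmx_mul hV hA.
have := minV _ _ hVA CE; rewrite det_mulmx normrM ler_pMr ?normr_gt0 -?unitfE -?unitmxE //.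
by rewrite leNgt dA.
Qed.

End John.

Section MVEEGauge.
Variables (R : realType) (d : nat).
Implicit Types (C : set 'cV[R]_d) (u v : 'cV[R]_d) (V : 'M[R]_d).

Lemma scaled1_sub_MVEE C (x0 : 'cV[R]_d) V : (0 < d)%N -> Defs.convex_set C -> compact C ->
  is_MVEE C x0 V -> scaled 1 x0 V `<=` C.
Proof.
move=> hd hC cC hE y; have hV := hE.1; rewrite /scaled /= minkE // /gauge => hy.
rewrite -[y](subrK x0) addrC -[y - x0](mulKVmx hV).
apply: MVEE_shrunk_sub => //; rewrite -[_^-1]mulr1 ler_pdivlMl //.
by rewrite ltr0n.
Qed.

Lemma gauge_le_sym b (x0 x1 : 'cV[R]_d) V v : V \in unitmx ->
  scaled b x0 V (x1 + v) -> scaled b x0 V (x1 - v) -> gauge V v <= b.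
Proof.
rewrite /scaled /= => hV; rewrite !minkE // => hp hm.
have -> : v = 2^-1 *: ((x1 + v - x0) - (x1 - v - x0)).
  by apply/matrixP => i j; rewrite !mxE; field.
rewrite gaugeZ ger0_norm ?invr_ge0 //; apply: le_trans (ler_wpM2l _ (gaugeD _ _ _)) _.
  by rewrite invr_ge0.
by rewrite gaugeN; lra.
Qed.

Lemma MVEE_gauge_bound C b (x0 x1 : 'cV[R]_d) V (V1 : 'M[R]_d) u :
  (0 < d)%N -> V \in unitmx ->
  Defs.convex_set C -> compact C -> is_MVEE C x1 V1 -> C `<=` scaled b x0 V ->
  enorm u <= d%:R^-1 -> gauge V (V1 *m u) <= b.
Proof.
move=> hd hV hC cC hE sub hu; apply: (gauge_le_sym (x1 := x1)) => //; apply: sub.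
  exact: MVEE_shrunk_sub.
by rewrite -mulmxN; apply: MVEE_shrunk_sub; rewrite ?enormN.
Qed.

End MVEEGauge.

Section Rounding.
Variables (R : realType) (d : nat).

Lemma round_int_vector (e : 'cV[R]_d) : exists2 p : 'cV[R]_d,
  forall i, p i 0 \is a Num.int & dotv (p - e) (p - e) <= d%:R / 4.
Proof.
exists (\col_i (Num.floor (e i 0 + 2^-1))%:~R) => [i|]; first by rewrite mxE intr_int.
have -> : d%:R / 4 = \sum_(i < d) (4^-1 : R).
  by rewrite sumr_const card_ord -[RHS]mulr_natr mulrC.
apply: ler_sum => i _; rewrite !mxE.
have /andP[lo hi] := floor_itv (e i 0 + 2^-1); rewrite intrD in hi.
nra.
Qed.

Lemma grid_point_near (M : 'M[R]_d) c z : M \in unitmx -> exists2 xg,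
  forall i, (M *m xg + c) i 0 \is a Num.int & enorm (M *m (xg - z)) <= Num.sqrt d%:R / 2.
Proof.
move=> hM; have [p hp hpe] := round_int_vector (M *m z + c).
exists (invmx M *m (p - c)) => [i|]; first by rewrite mulKVmx // subrK.
have -> : M *m (invmx M *m (p - c) - z) = p - (M *m z + c).
  by rewrite mulmxBr mulKVmx // opprD addrA addrAC.
rewrite -(ler_pXn2r (n := 2)) ?nnegrE ?enorm_ge0 ?divr_ge0 ?sqrtr_ge0 //.
rewrite enorm_sq expr_div_n sqr_sqrtr ?ler0n //.
by apply: le_trans hpe _; rewrite expr2 -natrM.
Qed.

End Rounding.

Section Grid.
Variables (R : realType) (d : nat) (alpha : R) (x1 : 'cV[R]_d) (V1 M : 'M[R]_d).
Variable c : 'cV[R]_d.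
Hypotheses (alpha0 : 0 < alpha) (hA : grid_map alpha x1 V1 M c).
Implicit Types (e u w : 'cV[R]_d) (V : 'M[R]_d).

Lemma grid_map_ballP e : enorm e <= alpha <->
  exists2 u, enorm u <= 1 & e = M *m x1 + c + d%:R^-1 *: (M *m (V1 *m u)).
Proof.
have E u : M *m (x1 + (d%:R^-1 *: V1) *m u) + c = M *m x1 + c + d%:R^-1 *: (M *m (V1 *m u)).
  by rewrite mulmxDr -scalemxAl -scalemxAr addrAC.
split => [he|[u hu ->]]; last first.
  rewrite -E; have : ((fun y => M *m y + c) @` ellipsoid x1 (d%:R^-1 *: V1))
    (M *m (x1 + (d%:R^-1 *: V1) *m u) + c).
    by exists (x1 + (d%:R^-1 *: V1) *m u) => //; exists u.
  by rewrite hA.2.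
have : [set y | enorm y <= alpha] e by [].
by rewrite -hA.2 => -[_ [u [hu ->]] <-]; exists u; rewrite // E.
Qed.

Lemma grid_center : M *m x1 + c = 0.
Proof.
set c' := M *m x1 + c; have [//|c0] := eqVneq c' 0; exfalso.
have r0 := enorm_gt0 c0; set r := enorm c' in r0.
pose e := - (alpha / r) *: c'.
have [|u hu eE] := (grid_map_ballP e).1.
  by rewrite enormZ normrN gtr0_norm ?divr_gt0 // -/r mulfVK ?gt_eqF.
have : enorm (c' + d%:R^-1 *: (M *m (V1 *m (- u)))) <= alpha.
  by apply/grid_map_ballP; exists (- u); rewrite ?enormN.
have -> : c' + d%:R^-1 *: (M *m (V1 *m (- u))) = (2 + alpha / r) *: c'.
  rewrite !mulmxN scalerN (_ : d%:R^-1 *: _ = e - c'); last by rewrite eE addrC addKr.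
  by apply/matrixP => i j; rewrite !mxE; ring.
rewrite enormZ -/r ger0_norm; last by rewrite addr_ge0 // divr_ge0 // ltW.
rewrite mulrDl mulfVK ?gt_eqF //; lra.
Qed.

Lemma grid_gauge_bound V (beta : R) : V \in unitmx ->
  (forall u, enorm u <= d%:R^-1 -> gauge V (V1 *m u) <= beta) ->
  forall w, alpha * gauge V w <= beta * enorm (M *m w).
Proof.
move=> hV hB w; have hM := hA.1.
have [w0|Mw0] := eqVneq (M *m w) 0.
  have -> : w = 0 by rewrite -(mulKmx hM w) w0 mulmx0.
  by rewrite mulmx0 enorm0 /gauge mulmx0 enorm0 !mulr0.
have r0 := enorm_gt0 Mw0; set r := enorm (M *m w) in r0 *.
have [|u hu eE] := (grid_map_ballP ((alpha / r) *: (M *m w))).1.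
  by rewrite enormZ gtr0_norm ?divr_gt0 // mulfVK ?gt_eqF.
have wE : (alpha / r) *: w = V1 *m (d%:R^-1 *: u).
  apply: (can_inj (mulKmx hM)).
  by rewrite -scalemxAr eE grid_center add0r -!scalemxAr.
have hu' : enorm (d%:R^-1 *: u) <= d%:R^-1.
  by rewrite enormZ ger0_norm ?invr_ge0 // ler_piMr ?invr_ge0.
have := hB _ hu'; rewrite -wE gaugeZ gtr0_norm ?divr_gt0 //.
by rewrite mulrAC ler_pdivrMr // mulrC.
Qed.

Lemma grid_rounding V (beta gamma : R) : (0 < d)%N -> V \in unitmx -> 0 < beta ->
  0 < gamma + 1 -> 2 * (gamma + 1) * beta ^+ 2 * Num.sqrt d%:R <= alpha ->
  (forall u, enorm u <= d%:R^-1 -> gauge V (V1 *m u) <= beta) ->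
  forall z, exists2 xg, (forall i, (M *m xg + c) i 0 \is a Num.int) &
    (1 + gamma) * gauge V (xg - z) <= (4 * beta)^-1.
Proof.
move=> hd hV b0 g0 halpha hB z; have [xg xg_int Mxg] := grid_point_near c z hA.1.
exists xg => //; have sd0 : 0 < Num.sqrt (d%:R : R) by rewrite sqrtr_gt0 ltr0n.
have := gauge_ge0 V (xg - z); set X := gauge V (xg - z) => X0.
have aX := grid_gauge_bound hV hB (xg - z); rewrite -/X in aX.
have : 2 * (gamma + 1) * beta ^+ 2 * Num.sqrt d%:R * X <= beta * (Num.sqrt d%:R / 2).
  apply: le_trans (ler_wpM2r X0 halpha) (le_trans aX _).
  by rewrite ler_wpM2l //; lra.
rewrite -[(4 * beta)^-1]div1r ler_pdivlMr; last lra.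
have -> : 2 * (gamma + 1) * beta ^+ 2 * Num.sqrt d%:R * X =
  (1 + gamma) * X * (4 * beta) * (beta * (Num.sqrt d%:R / 2)) by field.
by rewrite -[X in _ <= X -> _]mul1r ler_pM2r ?mulr_gt0 ?divr_gt0 //; lra.
Qed.

End Grid.

Section GridSteps.
Variables (R : realType) (d : nat) (K K' : set 'cV[R]_d) (x0 : 'cV[R]_d).
Variables (V M : 'M[R]_d) (c : 'cV[R]_d) (beta : R).
Hypotheses (hV : V \in unitmx) (convK : Defs.convex_set K) (subK : K' `<=` K).
Hypothesis innerK' : scaled 1 x0 V `<=` K'.
Implicit Types (x xg z : 'cV[R]_d).

Lemma grid_step x xg z (t s : R) : 1 <= beta -> K x -> 0 <= t ->
  (forall i, (M *m xg + c) i 0 \is a Num.int) ->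
  z = x0 + ((t + s) / (1 + t)) *: (x - x0) ->
  (1 + t) * gauge V (xg - z) + `|s| * mink x0 V x <= (2 * beta)^-1 ->
  gauge V (xg - z) + `|t + s| / (1 + t) * mink x0 V x <= beta ->
  grid_set (scaled beta x0 V `&` K) M c xg /\
  scaled (2 * beta)^-1 x0 V (xg + t *: (xg - x)).
Proof.
(* [z] is the point that the map [xg |-> xg + t (xg - x)] sends to [x0 + s (x - x0)]. *)
move=> b1 Kx t0 xg_int zE hy hxg; have t1 : 1 + t != 0 by rewrite gt_eqF //; lra.
set y := xg + t *: (xg - x).
have my : mink x0 V y <= (2 * beta)^-1.
  rewrite minkE //; have -> : y - x0 = (1 + t) *: (xg - z) + s *: (x - x0).
    by rewrite zE; apply/matrixP => i j; rewrite !mxE; field.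
  apply: le_trans (gaugeD _ _ _) _.
  by rewrite !gaugeZ -(@minkE _ _ x0 V x hV) ger0_norm ?addr_ge0.
have Ky : K y.
  apply/subK/innerK'; apply: le_trans my _.
  by rewrite invf_le1 ?mulr_gt0 //; lra.
have Kxg : K xg.
  have -> : xg = (t / (1 + t)) *: x + (1 - t / (1 + t)) *: y.
    by apply/matrixP => i j; rewrite !mxE; field.
  apply: convK => //; rewrite divr_ge0 ?addr_ge0 //= ler_pdivrMr ?mul1r; lra.
split=> //; split=> //; split=> //.
rewrite /scaled /= minkE //.
have -> : xg - x0 = (xg - z) + ((t + s) / (1 + t)) *: (x - x0).
  by rewrite zE opprD addrA subrK.
apply: le_trans (gaugeD _ _ _) _.
rewrite gaugeZ -(@minkE _ _ x0 V x hV) normrM normfV.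
by rewrite (ger0_norm (_ : 0 <= 1 + t)) //; lra.
Qed.

End GridSteps.

Section GridPoints.
Variables (R : realType) (d : nat) (K K' : set 'cV[R]_d) (x0 : 'cV[R]_d).
Variables (V M : 'M[R]_d) (c : 'cV[R]_d) (beta gamma : R).
Hypotheses (hV : V \in unitmx) (convK : Defs.convex_set K) (subK : K' `<=` K).
Hypothesis innerK' : scaled 1 x0 V `<=` K'.
Hypothesis near : forall z, exists2 xg, (forall i, (M *m xg + c) i 0 \is a Num.int) &
  (1 + gamma) * gauge V (xg - z) <= (4 * beta)^-1.

Lemma grid_point_inside x : (0 < d)%N -> 0 < gamma -> d%:R < beta ->
  K' x -> mink x0 V x <= d%:R -> exists xg,
  grid_set (scaled beta x0 V `&` K) M c xg /\
  scaled (2 * beta)^-1 x0 V (xg + gamma *: (xg - x)).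
Proof.
move=> hd g0 hbd K'x mx.
have d1 : 1 <= (d%:R : R) by rewrite ler1n.
set z := x0 + (gamma / (1 + gamma)) *: (x - x0).
have [xg xg_int hX] := near z; exists xg.
have X0 := gauge_ge0 V (xg - z); set X := gauge V (xg - z) in X0 hX *.
have m0 : 0 <= mink x0 V x by rewrite minkE // gauge_ge0.
have rho0 : 0 < (4 * beta)^-1 by rewrite invr_gt0 mulr_gt0 //; lra.
have rho1 : (4 * beta)^-1 <= 1 by rewrite invf_le1 ?mulr_gt0 //; lra.
have rhoE : (2 * beta)^-1 = 2 * (4 * beta)^-1 by field; lra.
apply: (grid_step hV convK subK innerK' (z := z) (s := 0)) => //; rewrite -/z -/X.
- lra.
- exact: subK.
- exact: ltW.
- by rewrite addr0.
- by rewrite normr0 mul0r addr0 rhoE; lra.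
have -> : `|gamma + 0| / (1 + gamma) = 1 - (1 + gamma)^-1.
  by rewrite addr0 gtr0_norm //; field; lra.
have ginv : 0 < (1 + gamma)^-1 < 1 by rewrite invr_gt0 invf_lt1; lra.
have : X <= (1 + gamma)^-1 * d%:R.
  by rewrite ler_pdivlMl; lra.
nra.
Qed.

Lemma grid_point_outside x : 1 < gamma -> gamma < beta -> K x -> ~ K' x -> exists xg,
  grid_set (scaled beta x0 V `&` K) M c xg /\
  scaled (2 * beta)^-1 x0 V (xg + (gamma / mink x0 V x) *: (xg - x)).
Proof.
move=> g1 hbg Kx K'x; set m := mink x0 V x.
have m1 : 1 < m by rewrite ltNge; apply/negP => m1; apply: K'x; exact: innerK'.
set rho := (4 * beta)^-1.
have rho0 : 0 < rho by rewrite invr_gt0 mulr_gt0 //; lra.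
have rho1 : rho < 1 by rewrite invf_lt1 ?mulr_gt0 //; lra.
set t := gamma / m; set s := - (rho / m).
have tg : t <= gamma by rewrite ler_pdivrMr ?ler_peMr //; lra.
have t0 : 0 < t by rewrite divr_gt0 //; lra.
set z := x0 + ((t + s) / (1 + t)) *: (x - x0).
have [xg xg_int hX] := near z; exists xg.
have X0 := gauge_ge0 V (xg - z); set X := gauge V (xg - z) in X0 hX *; rewrite -/rho in hX.
apply: (grid_step hV convK subK innerK' (s := s)) => //; rewrite -/z -/X.
- lra.
- exact: ltW.
- have -> : `|s| * m = rho by rewrite normrN gtr0_norm ?divr_gt0 ?mulfVK ?gt_eqF //; lra.
  have -> : (2 * beta)^-1 = 2 * rho by rewrite /rho; field; lra.
  nra.
- have -> : `|t + s| / (1 + t) * m = (gamma - rho) / (1 + t).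
    rewrite gtr0_norm /t /s; last by rewrite -mulrBl divr_gt0 //; lra.
    by field; rewrite !gt_eqF //; lra.
  have : (gamma - rho) / (1 + t) <= gamma - rho by rewrite ler_pdivrMr ?ler_peMr; lra.
  nra.
Qed.

End GridPoints.

Unset Implicit Arguments.

Theorem mainTheorem2 (R : realType) (d : nat) (hd : (0 < d)%N)
  (K K' : set 'cV[R]_d) (hK : convex_body K) (hK' : convex_body K')
  (hsub : K' `<=` K)
  (beta gamma alpha : R) (hbg : gamma < beta) (hg1 : 1 < gamma)
  (hbd : d%:R < beta)
  (halpha : 2 * (gamma + 1) * beta ^+ 2 * Num.sqrt d%:R <= alpha)
  (x0 : 'cV[R]_d) (V : 'M[R]_d) (hE : is_MVEE K' x0 V)
  (x1 : 'cV[R]_d) (V1 : 'M[R]_d)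
  (hE1 : is_MVEE (scaled beta x0 V `&` K) x1 V1)
  (M : 'M[R]_d) (c : 'cV[R]_d) (hA : grid_map alpha x1 V1 M c) :
  let G := grid_set (scaled beta x0 V `&` K) M c in
  (forall x, K' x -> exists xg, G xg /\
      scaled (2 * beta)^-1 x0 V (xg + gamma *: (xg - x))) /\
  (forall x, K x -> ~ K' x -> exists xg, G xg /\
      scaled (2 * beta)^-1 x0 V (xg + (gamma / mink x0 V x) *: (xg - x))).
Proof.
move=> G; have hV := hE.1; have [[convK [compK _]] [convK' [compK' _]]] := (hK, hK').
have innerK' := scaled1_sub_MVEE hd convK' compK' hE.
have convC : Defs.convex_set (scaled beta x0 V `&` K).
  by move=> x y t [? ?] [? ?] ht; split; [apply: (convex_scaled hV) | apply: convK].
have compC : compact (scaled beta x0 V `&` K).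
  by rewrite setIC; apply: compact_closedI compK (closed_scaled hV).
have [b0 g0] : 0 < beta /\ 0 < gamma + 1 by split; lra.
have a0 : 0 < alpha by apply: lt_le_trans halpha; rewrite !mulr_gt0 ?sqrtr_gt0 ?ltr0n.
have hB u : enorm u <= d%:R^-1 -> gauge V (V1 *m u) <= beta.
  by apply: (MVEE_gauge_bound hd hV convC compC hE1); exact: subIsetl.
have near := grid_rounding a0 hA hd hV b0 g0 halpha hB.
split=> [x K'x | x Kx K'x].
  by apply: (grid_point_inside hV convK hsub innerK' near) => //;
    [lra | exact: mink_le_dim hE K'x].
exact: (grid_point_outside hV convK hsub innerK' near).
Qed.
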